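(* Let $\kappa$ be a regular uncountable cardinal with $\kappa^{<\kappa}=\kappa$ and $\gamma^\omega<\kappa$ for all $\gamma<\kappa$, and suppose $\kappa=\lambda^+$. Then the linear order $I^0$ is $(<\kappa,bs)$-stable.
   Context: Order $\kappa\times\mathbb Q$ lexicographically; $I^0$ is the set of $f:\omega\to\kappa\times\mathbb Q$, $f(n)=(f_1(n),f_2(n))$, with $\{n<\omega\mid f_1(n)\ne0\}$ finite, ordered by $f<g$ iff $f(n)<g(n)$ for the least $n$ with $f(n)\ne g(n)$. For a linear order $A$, $B\subseteq A$ and $a\in A$, $tp_{bs}(a,B,A)$ is the set of atomic and negated atomic formulas (in the language $\{<\}$) with parameters from $B$ satisfied by $a$. $A$ is $(<\kappa,bs)$-stable if for every $B\subseteq A$ with $|B|<\kappa$, $|\{tp_{bs}(a,B,A)\mid a\in A\}|<\kappa$. *)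

From mathcomp Require Import all_boot all_order all_algebra.
Import Order.TTheory GRing.Theory Num.Theory.
Set Implicit Arguments.
Unset Strict Implicit.

Definition card_le (X Y : Type) : Prop :=
  exists f : X -> Y, forall x y, f x = f y -> x = y.
Definition card_lt (X Y : Type) : Prop := card_le X Y /\ ~ card_le Y X.

(** The cardinal kappa is represented by a type [K] carrying a strict well-order
    [ltK] (an ordinal), with least element [z] (the ordinal 0). *)
Definition strict_wellorder (K : Type) (ltK : K -> K -> Prop) : Prop :=
  well_founded ltK /\
  (forall x y w, ltK x y -> ltK y w -> ltK x w) /\
  (forall x y, ltK x y \/ x = y \/ ltK y x).

Definition seg (K : Type) (ltK : K -> K -> Prop) (a : K) : Type :=
  {b : K | ltK b a}.

(** [K] is an initial ordinal (a cardinal): every proper initial segment has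
    strictly smaller cardinality. *)
Definition initial_ordinal (K : Type) (ltK : K -> K -> Prop) : Prop :=
  forall a : K, card_lt (seg ltK a) K.

Definition regular (K : Type) (ltK : K -> K -> Prop) : Prop :=
  forall S : K -> Prop, (forall a, exists b, S b /\ ~ ltK b a) ->
    card_le K {b : K | S b}.

Definition uncountable (K : Type) : Prop := ~ card_le K nat.

(** kappa^{<kappa} = kappa : kappa^gamma <= kappa for every gamma < kappa *)
Definition small_powers (K : Type) (ltK : K -> K -> Prop) : Prop :=
  forall a : K, card_le (seg ltK a -> K) K.

Definition omega_powers_small (K : Type) (ltK : K -> K -> Prop) : Prop :=
  forall a : K, card_lt (nat -> seg ltK a) K.

(** kappa = lambda^+ : there is lambda = |a| < kappa such that every cardinal
    below kappa is at most lambda. *)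
Definition successor_cardinal (K : Type) (ltK : K -> K -> Prop) : Prop :=
  exists a : K, forall b : K, card_le (seg ltK b) (seg ltK a).

(** * Atomic / negated atomic formulas in the language {<} with one free
      variable and parameters from A. *)
Inductive bterm (A : Type) : Type := BVar | BPar (b : A).
Arguments BVar {A}.
Arguments BPar {A} b.
Inductive batom (A : Type) : Type :=
  | ALt (s t : bterm A) | AEq (s t : bterm A).
Arguments ALt {A} s t.
Arguments AEq {A} s t.
Inductive blit (A : Type) : Type := LPos (p : batom A) | LNeg (p : batom A).
Arguments LPos {A} p.
Arguments LNeg {A} p.

Definition term_in {A} (B : A -> Prop) (t : bterm A) : Prop :=
  match t with BVar => True | BPar b => B b end.
Definition atom_in {A} (B : A -> Prop) (p : batom A) : Prop :=
  match p with ALt s t | AEq s t => term_in B s /\ term_in B t end.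
Definition lit_in {A} (B : A -> Prop) (l : blit A) : Prop :=
  match l with LPos p | LNeg p => atom_in B p end.

Definition term_val {A} (a : A) (t : bterm A) : A :=
  match t with BVar => a | BPar b => b end.
Definition atom_sat {A} (ltA : A -> A -> Prop) (a : A) (p : batom A) : Prop :=
  match p with
  | ALt s t => ltA (term_val a s) (term_val a t)
  | AEq s t => term_val a s = term_val a t
  end.
Definition lit_sat {A} (ltA : A -> A -> Prop) (a : A) (l : blit A) : Prop :=
  match l with LPos p => atom_sat ltA a p | LNeg p => ~ atom_sat ltA a p end.

Definition tp_bs {A} (ltA : A -> A -> Prop) (a : A) (B : A -> Prop)
  : blit A -> Prop := fun l => lit_in B l /\ lit_sat ltA a l.

Definition bs_stable (K : Type) (A : Type) (ltA : A -> A -> Prop) : Prop :=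
  forall B : A -> Prop, card_lt {b : A | B b} K ->
    card_lt {P : blit A -> Prop | exists a : A, P = tp_bs ltA a B} K.

Definition ltKQ (K : Type) (ltK : K -> K -> Prop) (p q : K * rat) : Prop :=
  ltK p.1 q.1 \/ (p.1 = q.1 /\ (p.2 < q.2)%R).

Definition I0 (K : Type) (z : K) : Type :=
  {f : nat -> K * rat | exists N : nat, forall n, (N <= n)%N -> (f n).1 = z}.

Definition ltI0 (K : Type) (ltK : K -> K -> Prop) (z : K) (f g : I0 z) : Prop :=
  exists n : nat, (forall m, (m < n)%N -> sval f m = sval g m) /\
                  ltKQ ltK (sval f n) (sval g n).

From mathcomp Require Import all_boot all_order all_algebra.
From mathcomp Require Import boolp.

Set Implicit Arguments.
Unset Strict Implicit.

(* Let B be a set of fewer than kappa elements of I^0.  By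
   regularity all first coordinates of all elements of B lie below some
   alpha < kappa.  Truncate a in I^0 at the first n with a_1(n) >= alpha:
   keep a below n, put (alpha, 0) at n and (0, 0) after n.  Every b in B is
   below both a and its truncation at n, so a and its truncation compare
   alike with every b in B and have the same type over B.  Truncations are
   sequences in (gamma x Q)^omega for some gamma < kappa, and there are at
   most delta^omega < kappa of them for some delta < kappa. *)

Lemma sig_eq (A : Type) (P : A -> Prop) (s t : {x | P x}) :
  sval s = sval t -> s = t.
Proof. by case: s t => [x px] [y py] /= E; apply: eq_exist. Qed.

Lemma least_witness (P : nat -> Prop) :
  (exists n, P n) -> exists n, P n /\ forall m, (m < n)%N -> ~ P m.
Proof.
move=> exP; have exPb : exists n, `[< P n >] by case: exP => n /asboolP; exists n.
case: (ex_minnP exPb) => n /asboolP Pn minn; exists n; split=> // m ltmn.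
by move=> /asboolP /minn; rewrite leqNgt ltmn.
Qed.

Lemma card_le_trans X Y Z : card_le X Y -> card_le Y Z -> card_le X Z.
Proof. by move=> [f inj_f] [g inj_g]; exists (g \o f) => x y /inj_g /inj_f. Qed.

Lemma card_le_lt_trans X Y Z : card_le X Y -> card_lt Y Z -> card_lt X Z.
Proof.
move=> XY [YZ notZY]; split; first exact: card_le_trans XY YZ.
by move=> ZX; apply: notZY; apply: card_le_trans ZX XY.
Qed.

Lemma card_le_nat_fun X Y : card_le X Y -> card_le (nat -> X) (nat -> Y).
Proof.
move=> [f inj_f]; exists (fun u k => f (u k)) => u v E.
by apply: funext => k; apply: inj_f; apply: (congr1 (@^~ k) E).
Qed.

Lemma card_le_uncurry_nat Y : card_le (nat -> nat -> Y) (nat -> Y).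
Proof.
exists (fun u k => let p := odflt (0, 0)%N (unpickle k) in u p.1 p.2) => u v E.
apply: funext => i; apply: funext => j.
by have := congr1 (@^~ (pickle (i, j))) E; rewrite /= pickleK.
Qed.

Lemma card_le_range A X Y (F : A -> Y) (c : A -> X) :
  (forall a1 a2, c a1 = c a2 -> F a1 = F a2) ->
  card_le {y | exists a, y = F a} X.
Proof.
move=> cF; pose pre (y : {y | exists a, y = F a}) :=
  proj1_sig (cid (proj2_sig y)).
have preP y : sval y = F (pre y).
  exact: proj2_sig (cid (proj2_sig y)).
by exists (c \o pre) => y1 y2 /cF E; apply: sig_eq; rewrite !preP E.
Qed.

Section TypeTransfer.
Variables (A : Type) (ltA : A -> A -> Prop) (B : A -> Prop) (a a' : A).
Hypothesis lt_r : forall b, B b -> ltA a b <-> ltA a' b.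
Hypothesis lt_l : forall b, B b -> ltA b a <-> ltA b a'.
Hypothesis eq_r : forall b, B b -> a = b <-> a' = b.
Hypothesis lt_self : ltA a a <-> ltA a' a'.

Lemma atom_sat_transfer p :
  atom_in B p -> (atom_sat ltA a p <-> atom_sat ltA a' p).
Proof.
have eq_l b : B b -> b = a <-> b = a'.
  by move/eq_r => eqb; split=> E; symmetry; apply/eqb.
by case: p => [] [|b1] [|b2] //= [Bb1 Bb2]; auto.
Qed.

Lemma tp_bs_eq : tp_bs ltA a B = tp_bs ltA a' B.
Proof.
apply: funext => l; apply: propext.
rewrite /tp_bs; case: l => p /=; split=> -[inp satp]; split=> //;
  have := atom_sat_transfer inp; tauto.
Qed.

End TypeTransfer.

Section Lexicographic.
Variables (T : Type) (lt : T -> T -> Prop).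
Hypothesis lt_asym : forall p q, lt p q -> ~ lt q p.

Definition lex (x y : nat -> T) : Prop :=
  exists n, (forall m, (m < n)%N -> x m = y m) /\ lt (x n) (y n).

Lemma lt_irr_of_asym p : ~ lt p p.
Proof. by move=> lt_pp; apply: (lt_asym lt_pp lt_pp). Qed.

Lemma lex_irr x : ~ lex x x.
Proof. by case=> n [_ /lt_irr_of_asym]. Qed.

Section CommonPrefix.
Variables (x y b : nat -> T) (n : nat).
Hypothesis xy : forall m, (m < n)%N -> x m = y m.
Hypothesis bx : lt (b n) (x n).

Lemma lex_prefix_l : lex x b -> lex y b.
Proof.
case=> m [xbm xb]; have ltmn : (m < n)%N.
  case: ltngtP => // [ltnm|eq_mn]; first by move: bx; rewrite xbm // => /lt_irr_of_asym.
  by move: xb; rewrite eq_mn => /lt_asym.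
exists m; split; last by rewrite -xy.
by move=> k ltkm; rewrite -xy ?xbm // (ltn_trans ltkm ltmn).
Qed.

Lemma lex_prefix_r : lt (b n) (y n) -> lex b x -> lex b y.
Proof.
move=> byn [m [bxm bx_m]]; case: (ltngtP m n) => [ltmn|ltnm|eq_mn].
- exists m; split; last by rewrite -xy.
  by move=> k ltkm; rewrite -xy ?bxm // (ltn_trans ltkm ltmn).
- by move: bx; rewrite -bxm // => /lt_irr_of_asym.
- by exists n; split=> // k ltkn; rewrite -xy // bxm // eq_mn.
Qed.

End CommonPrefix.

(* Comparison with b is settled before, or at, the first index n where b
   falls below both x and y. *)
Lemma lex_common_prefix x y b n :
  (forall m, (m < n)%N -> x m = y m) -> lt (b n) (x n) -> lt (b n) (y n) ->
  [/\ lex x b <-> lex y b, lex b x <-> lex b y & x = b <-> y = b].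
Proof.
move=> xy bx byn; have yx m : (m < n)%N -> y m = x m by move/xy.
have neq u : lt (b n) (u n) -> u <> b by move=> + E; rewrite E => /lt_irr_of_asym.
split; split.
- exact: lex_prefix_l xy bx.
- exact: lex_prefix_l yx byn.
- exact: lex_prefix_r xy bx byn.
- exact: lex_prefix_r yx byn bx.
- by move/(neq x bx).
- by move/(neq y byn).
Qed.

End Lexicographic.

Section WellOrder.
Variables (K : Type) (ltK : K -> K -> Prop).
Hypothesis Hwo : strict_wellorder ltK.

Lemma ltK_irr x : ~ ltK x x.
Proof.
case: Hwo => wf _; elim: (wf x) => y _ IH lt_yy.
exact: (IH y lt_yy lt_yy).
Qed.

Lemma ltK_trans x y w : ltK x y -> ltK y w -> ltK x w.
Proof. by case: Hwo => _ [trans _]; apply: trans. Qed.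

Lemma ltK_total x y : ltK x y \/ x = y \/ ltK y x.
Proof. by case: Hwo => _ [_ total]; apply: total. Qed.

Lemma lt_leK_trans x y w : ltK x y -> ~ ltK w y -> ltK x w.
Proof.
move=> xy wy; case: (ltK_total x w) => [//|[E|wx]]; first by rewrite -E in wy.
by case: wy; apply: ltK_trans wx xy.
Qed.

Lemma le_ltK_trans x y w : ~ ltK y x -> ltK y w -> ltK x w.
Proof.
move=> yx yw; case: (ltK_total x w) => [//|[E|wx]]; first by rewrite E in yx.
by case: yx; apply: ltK_trans yw wx.
Qed.

Lemma ltKQ_asym p q : ltKQ ltK p q -> ~ ltKQ ltK q p.
Proof.
case=> [pq|[Epq pq]] [qp|[Eqp qp]].
- exact: ltK_irr (ltK_trans pq qp).
- by rewrite Eqp in pq; apply: ltK_irr pq.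
- by rewrite Epq in qp; apply: ltK_irr qp.
- by have := Order.POrderTheory.lt_asym p.2 q.2; rewrite pq qp.
Qed.

(* (x, t) is coded by the constant sequence x, except for the value g at
   position (pickle t).+1. *)
Lemma card_le_seg_count (C : countType) g d :
  ltK g d -> card_le (seg ltK g * C) (nat -> seg ltK d).
Proof.
move=> gd.
pose emb (x : seg ltK g) : seg ltK d := exist _ (sval x) (ltK_trans (svalP x) gd).
pose top : seg ltK d := exist _ g gd.
exists (fun p k => if k is k'.+1 then if k' == pickle p.2 then top else emb p.1
                   else emb p.1).
move=> [x s] [y t] E.
have -> : x = y by apply: sig_eq; apply: (congr1 sval (congr1 (@^~ 0%N) E)).
have := congr1 (@^~ (pickle s).+1) E; rewrite /= eqxx.
case: eqP => [/(pcan_inj (@pickleK _)) -> //|_].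
by move=> /(congr1 sval) /= Eg; have := svalP y; rewrite -Eg => /ltK_irr.
Qed.

Hypothesis Hreg : regular ltK.

Lemma bounded_of_card_lt X (f : X -> K) :
  ~ card_le K X -> exists r, forall x, ltK (f x) r.
Proof.
move=> notKX; apply: contrapT => unbounded; apply: notKX.
have range_unbounded a : exists b, (exists x, b = f x) /\ ~ ltK b a.
  apply: contrapT => bounded; apply: unbounded; exists a => x.
  by apply: contrapT => fxa; apply: bounded; exists (f x); split; first exists x.
exact: card_le_trans (Hreg range_unbounded) (card_le_range (c := id) (congr1 f)).
Qed.

Hypothesis Hunc : uncountable K.

Lemma exists_gtK x : exists y, ltK x y.
Proof.
have notKunit : ~ card_le K unit.
  move=> Kunit; apply: Hunc; apply: (card_le_trans Kunit).
  by exists (fun _ => 0%N) => [] [] [].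
by have [r xr] := bounded_of_card_lt (fun _ : unit => x) notKunit; exists r; apply: xr.
Qed.

Variable z : K.
Hypothesis Hz : forall x : K, ~ ltK x z.
Hypothesis Homega : omega_powers_small ltK.

Lemma small_I0_subset_bounded (B : I0 z -> Prop) :
  card_lt {b | B b} K ->
  exists al, ltK z al /\ forall b, B b -> forall n, ltK (sval b n).1 al.
Proof.
move=> [[e inj_e] notKB].
have [rho e_rho] := bounded_of_card_lt e notKB.
have [d1 rho_d1] := exists_gtK rho.
have notKBnat : ~ card_le K ({b | B b} * nat).
  move=> KBnat; case: (Homega d1) => _; apply.
  apply: card_le_trans KBnat (card_le_trans _ (card_le_seg_count nat rho_d1)).
  exists (fun p => (exist _ (e p.1) (e_rho p.1), p.2)) => [[b n] [b' n']] [].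
  by move=> /inj_e -> ->.
pose coord (p : {b | B b} * nat) := (sval (sval p.1) p.2).1.
have [be coord_be] := bounded_of_card_lt coord notKBnat.
have [al be_al] := exists_gtK be.
exists al; split; first exact: le_ltK_trans (@Hz be) be_al.
by move=> b Bb n; apply: ltK_trans (coord_be (exist _ b Bb, n)) be_al.
Qed.

End WellOrder.

Section Truncation.
Variables (K : Type) (ltK : K -> K -> Prop) (z al : K).
Hypothesis Hwo : strict_wellorder ltK.
Hypothesis z_al : ltK z al.

Definition trunc (a : nat -> K * rat) (m : nat) : K * rat :=
  if `[< forall k, (k <= m)%N -> ltK (a k).1 al >] then a m
  else if `[< forall k, (k < m)%N -> ltK (a k).1 al >] then (al, 0%R)
  else (z, 0%R).

Lemma truncE a : (forall n, ltK (a n).1 al) -> trunc a = a.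
Proof.
move=> a_al; apply: funext => m; rewrite /trunc.
by case: asboolP => // [] [].
Qed.

Lemma trunc_cut a n :
  ~ ltK (a n).1 al -> (forall m, (m < n)%N -> ltK (a m).1 al) ->
  (forall m, (m < n)%N -> trunc a m = a m) /\ trunc a n = (al, 0%R).
Proof.
move=> an below; split=> [m ltmn|]; rewrite /trunc.
  case: asboolP => // [] [] k lekm.
  exact/below/(leq_ltn_trans lekm).
case: asboolP => [below_n|_].
  by case: an; apply: below_n.
by case: asboolP.
Qed.

Lemma trunc_fst_lt a g m : ltK al g -> ltK (trunc a m).1 g.
Proof.
move=> al_g; rewrite /trunc; case: asboolP => [below|_].
  exact: ltK_trans (below m (leqnn m)) al_g.
by case: asboolP => _ //=; apply: ltK_trans z_al al_g.
Qed.

Lemma trunc_support a N :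
  (forall n, (N <= n)%N -> (a n).1 = z) ->
  forall n, (N <= n)%N -> (trunc a n).1 = z.
Proof.
move=> a_z n leNn; rewrite /trunc.
case: asboolP => [_|not_below]; first exact: a_z.
case: asboolP => // below; case: not_below => k.
by rewrite leq_eqVlt => /orP[/eqP ->|/below //]; rewrite a_z.
Qed.

Lemma lex_trunc a b : (forall n, ltK (b n).1 al) ->
  [/\ lex (ltKQ ltK) a b <-> lex (ltKQ ltK) (trunc a) b,
      lex (ltKQ ltK) b a <-> lex (ltKQ ltK) b (trunc a)
    & a = b <-> trunc a = b].
Proof.
move=> b_al; case: (EM (exists n, ~ ltK (a n).1 al)) => [ex_n|no_n]; last first.
  by rewrite truncE // => n; apply: contrapT => an; apply: no_n; exists n.
have [n [an minn]] := least_witness ex_n.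
have [pre tn] := trunc_cut an (fun m ltmn => contrapT (minn m ltmn)).
apply: (lex_common_prefix (@ltKQ_asym _ _ Hwo) (fun m ltmn => esym (pre m ltmn))).
- by left; apply: (lt_leK_trans Hwo (b_al n) an).
- by rewrite tn; left; apply: b_al.
Qed.

Definition truncI0 (a : I0 z) : I0 z :=
  exist _ (trunc (sval a))
    (let: ex_intro N a_z := svalP a in ex_intro _ N (trunc_support a_z)).

Variable B : I0 z -> Prop.
Hypothesis B_al : forall b, B b -> forall n, ltK (sval b n).1 al.

Lemma tp_bs_trunc a :
  tp_bs (@ltI0 _ ltK z) a B = tp_bs (@ltI0 _ ltK z) (truncI0 a) B.
Proof.
have lex_irr_I0 (u : I0 z) : ~ @ltI0 _ ltK z u u :=
  lex_irr (@ltKQ_asym _ _ Hwo) (x := sval u).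
apply: tp_bs_eq => [b /B_al/(lex_trunc (sval a))[] //|
                    b /B_al/(lex_trunc (sval a))[] //||].
- move=> b /B_al/(lex_trunc (sval a))[_ _ [ab ba]].
  by split=> E; apply: sig_eq; [apply: ab; rewrite E | apply: ba; rewrite -E].
- by split=> /lex_irr_I0.
Qed.

Lemma card_le_tp_bs g : ltK al g ->
  card_le {P | exists a, P = tp_bs (@ltI0 _ ltK z) a B} (nat -> seg ltK g * rat).
Proof.
move=> al_g.
pose code (a : I0 z) m :=
  (exist (fun k => ltK k g) _ (trunc_fst_lt (sval a) m al_g), (trunc (sval a) m).2).
apply: (card_le_range (c := code)) => a1 a2 E.
rewrite (tp_bs_trunc a1) (tp_bs_trunc a2); congr tp_bs.
apply: sig_eq; apply: funext => m /=.
move: (congr1 (@^~ m) E) => /= [E1 E2].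
by rewrite [LHS]surjective_pairing [RHS]surjective_pairing E1 E2.
Qed.

End Truncation.

Theorem mainTheorem14 (K : Type) (ltK : K -> K -> Prop) (z : K)
  (Hwo : strict_wellorder ltK)
  (Hz : forall x : K, ~ ltK x z)
  (Hinit : initial_ordinal ltK)
  (Hreg : regular ltK)
  (Hunc : uncountable K)
  (Hpow : small_powers ltK)
  (Homega : omega_powers_small ltK)
  (Hsucc : successor_cardinal ltK) :
  bs_stable K (@ltI0 K ltK z).
Proof.
move=> B small_B.
have [al [z_al B_al]] := small_I0_subset_bounded Hwo Hreg Hunc Hz Homega small_B.
have [g al_g] := exists_gtK Hreg Hunc al.
have [d g_d] := exists_gtK Hreg Hunc g.
apply: card_le_lt_trans (Homega d).
apply: card_le_trans (card_le_tp_bs Hwo z_al B_al al_g) _.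
exact: card_le_trans (card_le_nat_fun (card_le_seg_count Hwo rat g_d))
                     (card_le_uncurry_nat _).
Qed.
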